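(* Let $\mathfrak A=\langle A,f,g\rangle$ be a betweenness algebra with at least four elements. Then $\{0,1\}$ is the universe of a subalgebra of $\mathfrak A$ that is isomorphic to the two-element algebra $\mathfrak A_1=\langle\{0,1\},f_1,g_1\rangle$ with $f_1(0,0)=f_1(0,1)=f_1(1,0)=0$, $f_1(1,1)=1$ and $g_1(0,0)=g_1(0,1)=g_1(1,0)=1$, $g_1(1,1)=0$.
   Context: A PS-algebra is $\langle A,f,g\rangle$ where $A$ is a Boolean algebra with at least two elements (operations $+,\cdot,-,0,1$) and $f,g\colon A^2\to A$ satisfy: $f(x,y)=0$ whenever $x=0$ or $y=0$; $f$ is additive in each argument; $g(x,y)=1$ whenever $x=0$ or $y=0$; $g$ is co-additive in each argument ($g(x+x',y)=g(x,y)\cdot g(x',y)$, $g(x,y+y')=g(x,y)\cdot g(x,y')$). A betweenness algebra is a PS-algebra satisfying for all $x,y,z$: (ABT0) $x\leq f(x,x)$; (ABT1$_f$) $f(x,y)\leq f(y,x)$; (ABT1$_g$) $g(x,y)\leq g(y,x)$; (ABT2) $y\cdot f(x,z)\leq f(x\cdot f(x,y),z)$; (ABT3) $f(x,g(x,-y)\cdot y)\leq y$; (wMIA) if $x\neq0$ and $y\neq0$ then $g(x,y)\leq f(x,y)$. *)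

(* Boolean algebras are MathComp's complemented distributive
   lattices with top and bottom (ctbDistrLatticeType):
   + = `|`, . = `&`, - = ~`, 0 = \bot, 1 = \top. *)
From HB Require Import structures.
From mathcomp Require Import all_boot all_order.
Set Implicit Arguments. Unset Strict Implicit. Unset Printing Implicit Defensive.
Import Order.Theory.
Local Open Scope order_scope.

Section Defs.
Context {disp : Order.disp_t} {T : ctbDistrLatticeType disp}.

Definition PS_algebra (f g : T -> T -> T) : Prop :=
  (\bot : T) != \top /\
  (forall x y, (x = \bot \/ y = \bot) -> f x y = \bot) /\
  (forall x x' y, f (x `|` x') y = f x y `|` f x' y) /\
  (forall x y y', f x (y `|` y') = f x y `|` f x y') /\
  (forall x y, (x = \bot \/ y = \bot) -> g x y = \top) /\
  (forall x x' y, g (x `|` x') y = g x y `&` g x' y) /\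
  (forall x y y', g x (y `|` y') = g x y `&` g x y').

Definition betweenness_algebra (f g : T -> T -> T) : Prop :=
  PS_algebra f g /\
  (forall x, x <= f x x) /\
  (forall x y, f x y <= f y x) /\
  (forall x y, g x y <= g y x) /\
  (forall x y z, y `&` f x z <= f (x `&` f x y) z) /\
  (forall x y, f x (g x (~` y) `&` y) <= y) /\
  (forall x y, x != \bot -> y != \bot -> g x y <= f x y).

Definition at_least_four_elements : Prop :=
  exists a b c e : T, uniq [:: a; b; c; e].

Definition zero_one (x : T) : bool := (x == \bot) || (x == \top).

Definition is_subalgebra_universe (f g : T -> T -> T) (S : T -> bool) : Prop :=
  S \bot /\ S \top /\
  (forall x y, S x -> S y -> S (x `|` y)) /\
  (forall x y, S x -> S y -> S (x `&` y)) /\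
  (forall x, S x -> S (~` x)) /\
  (forall x y, S x -> S y -> S (f x y)) /\
  (forall x y, S x -> S y -> S (g x y)).

Definition subalgebra_iso_to (f g : T -> T -> T) (S : T -> bool)
    (f1 g1 : bool -> bool -> bool) : Prop :=
  exists h : bool -> T,
    injective h /\
    (forall x, S x <-> exists b, h b = x) /\
    h false = \bot /\ h true = \top /\
    (forall a b, h (a || b) = h a `|` h b) /\
    (forall a b, h (a && b) = h a `&` h b) /\
    (forall a, h (~~ a) = ~` h a) /\
    (forall a b, h (f1 a b) = f (h a) (h b)) /\
    (forall a b, h (g1 a b) = g (h a) (h b)).

End Defs.

Definition f1 (a b : bool) : bool :=
  match a, b with true, true => true | _, _ => false end.
Definition g1 (a b : bool) : bool :=
  match a, b with true, true => false | _, _ => true end.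

(* The least value of g is z = g(1,1), and ABT3 at y = z gives f(x,z) <= z.
   If z = 1 then g is constantly 1, and ABT3 and wMIA at x = 1 force every
   y <> 0 to be 1, so the algebra has only two elements (three elements
   would already contradict this).  Otherwise -z <> 0, so wMIA gives
   z <= g(-z,-z) <= f(-z,-z), and ABT2 with x = -z, y = z bounds
   z = z . f(-z,-z) by f(-z . f(-z,z), -z) = f(0,-z) = 0.  Hence g(1,1) = 0,
   f(1,1) = 1 by ABT0, and {0,1} with the restricted operations is the
   two-element algebra A_1. *)
From mathcomp Require Import all_boot all_order.
Import Order.Theory.
Local Open Scope order_scope.

Section LatticeMaps.
Context {disp : Order.disp_t} {T : latticeType disp}.

Lemma join_meet_morph_nhomo (h : T -> T) :
  (forall x y, h (x `|` y) = h x `&` h y) -> {homo h : x y /~ x <= y}.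
Proof. by move=> hD x y /join_idPr <-; rewrite hD leIl. Qed.

End LatticeMaps.

Section Betweenness.
Context {disp : Order.disp_t} {T : ctbDistrLatticeType disp}.
Context {f g : T -> T -> T}.

Hypothesis f_bot : forall x y, (x = \bot \/ y = \bot) -> f x y = \bot.
Hypothesis gDl : forall x x' y, g (x `|` x') y = g x y `&` g x' y.
Hypothesis gDr : forall x y y', g x (y `|` y') = g x y `&` g x y'.
Hypothesis ABT2 : forall x y z, y `&` f x z <= f (x `&` f x y) z.
Hypothesis ABT3 : forall x y, f x (g x (~` y) `&` y) <= y.
Hypothesis wMIA : forall x y, x != \bot -> y != \bot -> g x y <= f x y.

Lemma g_top_top_min x y : g \top \top <= g x y.
Proof.
have gl : {homo g^~ \top : u v /~ u <= v}.
  by apply: join_meet_morph_nhomo => u v; exact: gDl.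
apply: le_trans (gl _ _ (lex1 x)) _.
exact: join_meet_morph_nhomo (gDr x) _ _ (lex1 y).
Qed.

Lemma f_le_g_top_top x : f x (g \top \top) <= g \top \top.
Proof.
have := ABT3 x (g \top \top).
by have /meet_idPr -> : g \top \top <= g x (~` g \top \top) by exact: g_top_top_min.
Qed.

Lemma g_top_top_eq_top_zero_one :
  g \top \top = \top -> forall y : T, zero_one y.
Proof.
move=> g11; have gT x y : g x y = \top.
  by apply/eqP; rewrite eq_le lex1 -g11 g_top_top_min.
move=> y; rewrite /zero_one; have [//|y0 /=] := eqVneq y \bot.
have top0 : (\top : T) != \bot.
  apply: contraNneq y0 => t0.
  by rewrite -(lex0 y) -t0 lex1.
rewrite eq_le lex1 /=; have := ABT3 \top y; rewrite gT meet1x.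
by apply: le_trans; rewrite -{1}(gT \top y) wMIA.
Qed.

Lemma g_top_top_neq_top_eq_bot : g \top \top != \top -> g \top \top = \bot.
Proof.
set z := g \top \top => z1.
have nz : ~` z != \bot by rewrite -compl1 (can_eq complK).
have zf : z <= f (~` z) (~` z).
  by apply: le_trans (wMIA _ _ nz nz); exact: g_top_top_min.
have disj : ~` z `&` f (~` z) z = \bot.
  apply/eqP; rewrite -lex0 -(meetCx z); apply: leI2 => //.
  exact: f_le_g_top_top.
have := ABT2 (~` z) z (~` z); rewrite disj (f_bot \bot (~` z)); last by left.
by rewrite (meet_idPl zf) lex0 => /eqP.
Qed.

End Betweenness.

Section TwoElementSubalgebra.
Context {disp : Order.disp_t} {T : ctbDistrLatticeType disp}.

Lemma at_least_four_elements_not_zero_one :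
  at_least_four_elements (T := T) -> ~ (forall y : T, zero_one y).
Proof.
move=> [a [b [c [e uniq_abce]]]] all01.
have sub01 : {subset [:: a; b; c; e] <= [:: \bot; \top]}.
  by move=> x _; rewrite !inE; exact: all01.
by have := uniq_leq_size uniq_abce sub01.
Qed.

Definition of_bool (b : bool) : T := if b then \top else \bot.

Lemma zero_one_of_bool (x : T) : zero_one x <-> exists b, of_bool b = x.
Proof.
split; first by case/orP => /eqP ->; [exists false | exists true].
by case=> [[]] <-; rewrite /zero_one eqxx ?orbT.
Qed.

Lemma of_bool_inj : (\bot : T) != \top -> injective of_bool.
Proof. by move=> bot_top [] [] // /eqP; rewrite ?(eq_sym \top) (negbTE bot_top). Qed.

Lemma of_boolU a b : of_bool (a || b) = of_bool a `|` of_bool b.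
Proof. by case: a; case: b; rewrite /= ?joinx1 ?join1x ?joinx0. Qed.

Lemma of_boolI a b : of_bool (a && b) = of_bool a `&` of_bool b.
Proof. by case: a; case: b; rewrite /= ?meetx0 ?meet0x ?meetx1. Qed.

Lemma of_boolC a : of_bool (~~ a) = ~` of_bool a.
Proof. by case: a; rewrite /= ?compl1 ?compl0. Qed.

Context {f g : T -> T -> T}.

Lemma of_bool_f1 a b :
    (forall x y, (x = \bot \/ y = \bot) -> f x y = \bot) -> f \top \top = \top ->
  of_bool (f1 a b) = f (of_bool a) (of_bool b).
Proof. by move=> f_bot f11; case: a; case: b; rewrite /f1 /= ?f11 // f_bot; auto. Qed.

Lemma of_bool_g1 a b :
    (forall x y, (x = \bot \/ y = \bot) -> g x y = \top) -> g \top \top = \bot ->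
  of_bool (g1 a b) = g (of_bool a) (of_bool b).
Proof. by move=> g_bot g11; case: a; case: b; rewrite /g1 /= ?g11 // g_bot; auto. Qed.

Lemma subalgebra_iso_to_universe S (f' g' : bool -> bool -> bool) :
  subalgebra_iso_to f g S f' g' -> is_subalgebra_universe f g S.
Proof.
move=> [h [_ [hS [h0 [h1 [hU [hI [hC [hf hg]]]]]]]]].
have Sh b : S (h b) by apply/hS; exists b.
rewrite /is_subalgebra_universe -h0 -h1.
by do ![split | move=> ? ? /hS[? <-] /hS[? <-] | move=> ? /hS[? <-]];
  rewrite -?hU -?hI -?hC -?hf -?hg.
Qed.

Lemma of_bool_subalgebra_iso :
    (\bot : T) != \top ->
    (forall x y, (x = \bot \/ y = \bot) -> f x y = \bot) ->
    (forall x y, (x = \bot \/ y = \bot) -> g x y = \top) ->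
    f \top \top = \top -> g \top \top = \bot ->
  subalgebra_iso_to f g zero_one f1 g1.
Proof.
move=> bot_top f_bot g_bot f11 g11; exists of_bool.
split; first exact: of_bool_inj.
split; first exact: zero_one_of_bool.
do 2!split => //; split; first exact: of_boolU.
split; first exact: of_boolI.
split; first exact: of_boolC.
by split=> a b; [exact: of_bool_f1 | exact: of_bool_g1].
Qed.

End TwoElementSubalgebra.

Theorem theorem45 (disp : Order.disp_t) (T : ctbDistrLatticeType disp)
    (f g : T -> T -> T) :
  betweenness_algebra f g ->
  at_least_four_elements (T := T) ->
  is_subalgebra_universe f g zero_one /\
  subalgebra_iso_to f g zero_one f1 g1.
Proof.
move=> [[bot_top [f_bot [_ [_ [g_bot [gDl gDr]]]]]] [ABT0 [_ [_ [ABT2 [ABT3 wMIA]]]]]].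
move=> /at_least_four_elements_not_zero_one not_all01.
have g11 : g \top \top = \bot.
  have [g11|g11] := eqVneq (g \top \top) \top.
    by case: not_all01; exact: g_top_top_eq_top_zero_one gDl gDr ABT3 wMIA g11.
  exact: g_top_top_neq_top_eq_bot f_bot gDl gDr ABT2 ABT3 wMIA g11.
have f11 : f \top \top = \top by apply/eqP; rewrite eq_le lex1 ABT0.
have iso := of_bool_subalgebra_iso bot_top f_bot g_bot f11 g11.
by split; first exact: subalgebra_iso_to_universe iso.
Qed.
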